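(* Let $A$ be a finite abelian group. There exists a non-abelian finite group $G$ having a subgroup $B\cong A$ with $\mathcal{CD}(G)=\{B\}$ if and only if $A\neq 1$, $A\not\cong\mathbb{Z}_2$, $A\not\cong\mathbb{Z}_4$, and $A\not\cong\mathbb{Z}_2\times\mathbb{Z}_4$.
   Context: For a finite group $G$ and $H\le G$, $m_G(H)=|H|\,|C_G(H)|$, $m^*(G)=\max\{m_G(H)\mid H\le G\}$, and the Chermak-Delgado lattice is $\mathcal{CD}(G)=\{H\le G\mid m_G(H)=m^*(G)\}$. *)

From mathcomp Require Import all_boot all_order all_fingroup all_algebra.
From mathcomp Require Import all_solvable.
Set Implicit Arguments. Unset Strict Implicit. Unset Printing Implicit Defensive.
Local Open Scope group_scope.

Definition mCD (gT : finGroupType) (G H : {set gT}) : nat := #|H| * #|'C_G(H)|.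

Definition mstarCD (gT : finGroupType) (G : {set gT}) : nat :=
  \max_(H : {set gT} | group_set H && (H \subset G)) mCD G H.

Definition CDlattice (gT : finGroupType) (G : {set gT}) : {set {set gT}} :=
  [set H : {set gT} | [&& group_set H, H \subset G & mCD G H == mstarCD G]].

From mathcomp Require Import all_boot all_order all_fingroup all_algebra.
From mathcomp Require Import all_solvable zify.
Set Implicit Arguments. Unset Strict Implicit. Unset Printing Implicit Defensive.
Local Open Scope group_scope.

(* If CD(G) = {B} with G nonabelian, then B is normal and self-centralising, so
   G/B embeds in Aut(B), and m*(G) = |B|^2 exceeds m_G(G) = |G| |Z(G)|.  For
   B = Z_2 or Z_4 the group Aut(B) is too small for this; for B = Z_2 x Z_4 it
   is a 2-group, which forces |G : B| = 2 and |G| = 16, and then an element of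
   G outside B acts on B as an involution with at least four fixed points, all
   of them central in G.
   Conversely, if an automorphism al of A of prime order p fixes fewer than
   |A|/p points, then every g outside A in the holomorph G = A ><| <al> has
   |G : A| |C_A(g)| < |A|; comparing H and C_G(H) with A shows that A is the
   only subgroup with m_G(H) >= |A|^2.  Inversion is such an automorphism
   unless at least half of A are involutions; in that case A = <a> x <b> x L
   with a, b involutions (which excludes exactly 1, Z_2, Z_4 and Z_2 x Z_4),
   and the automorphism permuting a, b, ab cyclically and fixing L works. *)

Section CDBasics.
Variable gT : finGroupType.
Implicit Types G H B : {group gT}.

Lemma mCD_le_mstarCD G H : H \subset G -> mCD G H <= mstarCD G.
Proof.
move=> sHG; apply: (@leq_bigmax_cond _ (fun X => group_set X && (X \subset G))).
by rewrite groupP.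
Qed.

Lemma mstarCD_leP G n : (forall H, H \subset G -> mCD G H <= n) -> mstarCD G <= n.
Proof. by move=> leGn; apply/bigmax_leqP => X /andP[gX]; apply: (leGn (Group gX)). Qed.

Lemma mem_CDlattice G H :
  (gval H \in CDlattice G) = (H \subset G) && (mCD G H == mstarCD G).
Proof. by rewrite inE groupP. Qed.

Lemma leq_card_indexI G B H :
  H \subset G -> B \subset G -> #|H| <= #|G : B| * #|H :&: B|.
Proof.
move=> sHG sBG; rewrite -(leq_pmul2r (cardG_gt0 B)) mul_cardG mulnAC.
by rewrite [(#|G : B| * _)%N]mulnC Lagrange // leq_mul2r subset_leq_card ?orbT // mul_subG.
Qed.

End CDBasics.

(** * A criterion for a one-element Chermak-Delgado lattice *)

Section UniqueCDCriterion.
Variables (gT : finGroupType) (G B : {group gT}).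
Hypotheses (abB : abelian B) (ltBG : B \proper G).
Hypothesis smallC : {in G :\: B, forall g, #|G : B| * #|'C_B[g]| < #|B|}.

Let sBG : B \subset G := proper_sub ltBG.
Let sBC : B \subset 'C_G(B). Proof. by rewrite subsetI sBG. Qed.

Lemma commuting_pair_lt (X Y : {group gT}) :
  X \subset G -> Y \subset G -> X \subset 'C(Y) -> ~~ (X \subset B) ->
  #|X| * #|Y| < #|B| * #|B|.
Proof.
move=> sXG sYG cXY /subsetPn[x Xx nBx].
have Gx : x \in G := subsetP sXG x Xx.
have sYB_Cx : Y :&: B \subset 'C_B[x].
  apply/subsetP => y /setIP[Yy By]; rewrite inE By; apply/cent1P.
  exact/esym/(centP (subsetP cXY x Xx)).
have ltx := smallC (x:=x); rewrite inE nBx Gx in ltx.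
have [sYB | /subsetPn[y Yy nBy]] := boolP (Y \subset B).
  have leY : #|Y| <= #|'C_B[x]| by rewrite subset_leq_card // -(setIidPl sYB).
  apply: leq_ltn_trans (_ : #|G| * #|'C_B[x]| < _).
    exact: leq_mul (subset_leq_card sXG) leY.
  by rewrite -(Lagrange sBG) -mulnA ltn_pmul2l ?cardG_gt0 // ltx.
have sXB_Cy : X :&: B \subset 'C_B[y].
  apply/subsetP => z /setIP[Xz Bz]; rewrite inE Bz; apply/cent1P.
  exact: (centP (subsetP cXY z Xz)).
have lty := smallC (x:=y); rewrite inE nBy (subsetP sYG) // in lty.
apply: leq_ltn_trans (ltn_mul (lty isT) (ltx isT)).
apply: leq_mul; apply: leq_trans (leq_card_indexI _ sBG) _ => //;
  by rewrite leq_mul2l subset_leq_card ?orbT.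
Qed.

Lemma cent_uniqueCD : 'C_G(B) = B.
Proof.
apply/eqP; rewrite eqEsubset sBC andbT; apply: contraT => nsCB.
have := commuting_pair_lt (subsetIl G 'C(B)) sBG (subsetIr _ _) nsCB.
by rewrite ltn_pmul2r ?cardG_gt0 // ltnNge subset_leq_card.
Qed.

Lemma mCD_lt_uniqueCD (H : {group gT}) :
  H \subset G -> gval H != B -> mCD G H < #|B| * #|B|.
Proof.
move=> sHG neHB; rewrite /mCD.
have [sHB | nsHB] := boolP (H \subset B); last first.
  by apply: commuting_pair_lt; rewrite ?subsetIl // centsC subsetIr.
have [sCB | nsCB] := boolP ('C_G(H) \subset B); last first.
  by rewrite mulnC; apply: commuting_pair_lt; rewrite ?subsetIl ?subsetIr.
have ltHB : #|H| < #|B| by rewrite proper_card // properEneq neHB.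
apply: leq_ltn_trans (_ : #|H| * #|B| < _); last by rewrite ltn_pmul2r.
by rewrite leq_mul2l subset_leq_card ?orbT.
Qed.

Lemma mstarCD_uniqueCD : mstarCD G = (#|B| * #|B|)%N.
Proof.
have mB : mCD G B = (#|B| * #|B|)%N by rewrite /mCD cent_uniqueCD.
apply/eqP; rewrite eqn_leq -{2}mB mCD_le_mstarCD // andbT.
apply: mstarCD_leP => H sHG; have [-> | neHB] := eqVneq (gval H) B.
  by rewrite mB.
exact/ltnW/mCD_lt_uniqueCD.
Qed.

Lemma CDlattice_uniqueCD : CDlattice G = [set gval B].
Proof.
apply/setP => X; rewrite [in RHS]inE; apply/idP/eqP => [|->]; last first.
  by rewrite mem_CDlattice sBG mstarCD_uniqueCD /mCD cent_uniqueCD eqxx.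
rewrite inE mstarCD_uniqueCD => /and3P[gX sXG /eqP mX].
apply/eqP/negPn/negP => neXB.
by have := mCD_lt_uniqueCD (H := Group gX) sXG neXB; rewrite /= mX ltnn.
Qed.

Lemma nonabelian_uniqueCD : ~~ abelian G.
Proof.
apply/negP => abG; have sGC : G \subset 'C(B) := subset_trans abG (centS sBG).
by move: ltBG; rewrite properE -{2}cent_uniqueCD subsetI subxx sGC andbF.
Qed.

End UniqueCDCriterion.

Lemma isog_Zp_setT (gT : finGroupType) (A : {group gT}) n : 1 < n ->
  (A \isog [set: 'Z_n]) = cyclic A && (#|A| == n).
Proof.
move=> n_gt1; have cycZ : cyclic [set: 'Z_n] by rewrite Zp_cycle cycle_cyclic.
have cardZ : #|[set: 'Z_n]| = n by rewrite cardsT card_ord Zp_cast.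
apply/idP/andP => [isoA | [cycA /eqP cardA]].
  by rewrite (isog_cyclic isoA) (card_isog isoA) cardZ.
by rewrite isog_cyclic_card // cycZ cardZ cardA eqxx.
Qed.

Local Notation Z2Z4 := ('Z_2 * 'Z_4)%type.

Definition Z2Z4_elts : seq Z2Z4 := [seq (inZp i, inZp j) | i <- iota 0 2, j <- iota 0 4].

Lemma mem_Z2Z4_elts x : x \in Z2Z4_elts.
Proof. by case: x => [[[|[|i]] ?] [[|[|[|[|j]]]] ?]]. Qed.

Definition Z2Z4_map (c1 c2 x : Z2Z4) : Z2Z4 := c1 ^+ x.1 * c2 ^+ x.2.

Lemma Z2Z4_map_id : all (fun x => Z2Z4_map (Zp1, Zp0) (Zp0, Zp1) x == x) Z2Z4_elts.
Proof. by vm_compute. Qed.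

Definition Z2Z4_aut_spec (F : Z2Z4 -> Z2Z4) : bool :=
  all (fun x => F (F (F (F x))) == x) Z2Z4_elts &&
  (all (fun x => F (F x) == x) Z2Z4_elts ==> (3 < count (fun x => F x == x) Z2Z4_elts)).

(* An automorphism of Z_2 x Z_4 is [Z2Z4_map c1 c2], where c1 and c2 are the
   images of the generators and c1 ^+ 2 = 1; all such injective maps are checked. *)
Lemma Z2Z4_map_check : all (fun c1 => all (fun c2 =>
  (c1 ^+ 2 == 1) && uniq (map (Z2Z4_map c1 c2) Z2Z4_elts) ==>
  Z2Z4_aut_spec (Z2Z4_map c1 c2)) Z2Z4_elts) Z2Z4_elts.
Proof. by vm_compute. Qed.

Lemma Aut_Z2Z4E a : a \in Aut [set: Z2Z4] -> a =1 Z2Z4_map (a (Zp1, Zp0)) (a (Zp0, Zp1)).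
Proof.
move=> Aa x; have /allP/(_ x (mem_Z2Z4_elts x))/eqP {1}<- := Z2Z4_map_id.
by rewrite /Z2Z4_map -(autmE Aa) morphM ?inE // !morphX ?inE.
Qed.

Lemma Aut_Z2Z4P a : a \in Aut [set: Z2Z4] ->
  a ^+ 4 = 1 /\ (a ^+ 2 = 1 -> 3 < #|[set x | a x == x]|).
Proof.
move=> Aa; have aE := Aut_Z2Z4E Aa.
have c1_2 : a (Zp1, Zp0) ^+ 2 == 1.
  have e1_2 : (Zp1, Zp0) ^+ 2 = 1 :> Z2Z4 by apply/eqP.
  by rewrite -(autmE Aa) -morphX ?inE // e1_2 morph1.
set F := Z2Z4_map _ _ in aE.
have uniqF : uniq (map F Z2Z4_elts).
  by rewrite -(eq_map aE) map_inj_uniq; [vm_compute | apply: perm_inj].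
have := Z2Z4_map_check => /allP/(_ _ (mem_Z2Z4_elts (a (Zp1, Zp0))))/allP.
move=> /(_ _ (mem_Z2Z4_elts (a (Zp0, Zp1)))); cbv beta; rewrite -/F c1_2 uniqF.
case/andP=> /allP F4 /implyP F2; split.
  by apply/permP => x; rewrite permX perm1 /= !aE; apply/eqP/F4/mem_Z2Z4_elts.
move=> a2; have /F2 : all (fun x => F (F x) == x) Z2Z4_elts.
  by apply/allP => x _; rewrite -!aE -permM (_ : a * a = 1) ?perm1.
rewrite -size_filter => /leq_trans-> //; rewrite -(card_uniqP _) ?filter_uniq //.
  by apply: subset_leq_card; apply/subsetP => x; rewrite mem_filter in_set -aE => /andP[].
Qed.

Lemma exponent_Aut_Z2Z4 : exponent (Aut [set: Z2Z4]) %| 4.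
Proof. by apply/exponentP => a /Aut_Z2Z4P[]. Qed.

Lemma Aut_isog_Z2Z4P (gT : finGroupType) (B : {group gT}) : B \isog [set: Z2Z4] ->
  2.-group (Aut B) /\
  (forall a : {perm gT}, a \in Aut B -> a ^+ 2 = 1 -> 3 < #|[set x in B | a x == x]|).
Proof.
case/isog_isom => f /isomP[injf imf]; split.
  rewrite -(isog_pgroup 2 (injm_Aut injf (subxx B))) /= imf -pnat_exponent.
  exact: pnat_dvd exponent_Aut_Z2Z4 _.
move=> a Aa a2; pose b := Aut_isom injf (subxx B) a.
have Ab : b \in Aut [set: Z2Z4] by rewrite -imf Aut_Aut_isom.
have b2 : b ^+ 2 = 1.
  rewrite -(morphX (Aut_isom_morphism injf (subxx B))) //= a2.
  by rewrite (morph1 (Aut_isom_morphism injf (subxx B))).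
have fixE : [set y | b y == y] = f @* [set x in B | a x == x].
  apply/setP => y; rewrite inE; apply/idP/idP => [/eqP by_y | ].
    have : y \in f @* B by rewrite imf inE.
    case/morphimP => x _ Bx def_y; apply/morphimP; exists x => //.
    rewrite inE Bx; apply/eqP/(injmP injf); rewrite ?Aut_closed //.
    by move: by_y; rewrite def_y /b Aut_isomE.
  case/morphimP => x _; rewrite inE => /andP[Bx /eqP ax] ->.
  by rewrite Aut_isomE // ax.
have := (Aut_Z2Z4P Ab).2 b2; rewrite fixE card_injm //.
by apply/subsetP => x; rewrite inE => /andP[].
Qed.

Lemma center_gt1_pgroup (gT : finGroupType) (p : nat) (G : {group gT}) :
  p.-group G -> ~~ abelian G -> 1 < #|'Z(G)|.
Proof.
move=> pG nabG; rewrite cardG_gt1; apply: contraNneq nabG.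
by move/(trivg_center_pgroup pG) ->; apply: abelian1.
Qed.

Lemma index2_cent1_sub_center (gT : finGroupType) (G B : {group gT}) g :
  abelian B -> B \subset G -> #|G : B| = 2 -> g \in G :\: B -> 'C_B[g] \subset 'Z(G).
Proof.
move=> abB sBG iGB Gg; apply/subsetP => z /setIP[Bz /cent1P czg].
rewrite /center inE (subsetP sBG) //=; apply/centP => y Gy.
have [By | nBy] := boolP (y \in B); first exact: (centsP abB).
have : y \in B :* g by rewrite (rcoset_index2 sBG iGB Gg) inE nBy.
by case/rcosetP => b Bb ->; apply: commuteM; [apply: (centsP abB) | ].
Qed.

(** * Groups whose Chermak-Delgado lattice is a single subgroup *)

Section SingletonCDlattice.
Variables (gT : finGroupType) (G B : {group gT}).
Hypothesis CDG : CDlattice G = [set gval B].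

Let B_CD : gval B \in CDlattice G. Proof. by rewrite CDG set11. Qed.

Lemma sub_CDsingleton : B \subset G.
Proof. by move: B_CD; rewrite mem_CDlattice => /andP[]. Qed.

Lemma mCD_CDsingleton : mCD G B = mstarCD G.
Proof. by move: B_CD; rewrite mem_CDlattice => /andP[_ /eqP]. Qed.

Lemma CDsingleton_eq (H : {group gT}) :
  H \subset G -> mCD G H = mstarCD G -> H :=: B.
Proof. by move=> sHG mH; apply/set1P; rewrite -CDG mem_CDlattice sHG mH eqxx. Qed.

Lemma norm_CDsingleton : G \subset 'N(B).
Proof.
apply/subsetP => g Gg; apply/normP; apply: (@CDsingleton_eq (B :^ g)%G).
  by rewrite -(conjGid Gg) conjSg sub_CDsingleton.
by rewrite -mCD_CDsingleton /mCD cardJg -{1}(conjGid Gg) centJ -conjIg cardJg.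
Qed.

Lemma cent_CDsingleton : 'C_G(B) = B.
Proof.
apply: CDsingleton_eq; first exact: subsetIl.
apply/eqP; rewrite eqn_leq mCD_le_mstarCD ?subsetIl //= -mCD_CDsingleton /mCD.
by rewrite mulnC leq_mul2l subset_leq_card ?orbT // subsetI sub_CDsingleton centsC subsetIr.
Qed.

Lemma abelian_CDsingleton : abelian B.
Proof. by rewrite /abelian -{1}cent_CDsingleton subsetIr. Qed.

Lemma mstarCD_CDsingleton : mstarCD G = (#|B| * #|B|)%N.
Proof. by rewrite -mCD_CDsingleton /mCD cent_CDsingleton. Qed.

Lemma card_conj_aut_CDsingleton : #|conj_aut B @* G| = #|G : B|.
Proof.
rewrite card_morphim ker_conj_aut (setIidPr norm_CDsingleton).
by rewrite -{2}cent_CDsingleton indexgI.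
Qed.

Lemma index_dvd_Aut_CDsingleton : #|G : B| %| #|Aut B|.
Proof. by rewrite -card_conj_aut_CDsingleton cardSg ?Aut_conj_aut. Qed.

Hypothesis nabG : ~~ abelian G.

Lemma proper_CDsingleton : B \proper G.
Proof.
rewrite properEneq sub_CDsingleton andbT.
by apply: contraNneq nabG => <-; apply: abelian_CDsingleton.
Qed.

Lemma index_gt1_CDsingleton : 1 < #|G : B|.
Proof. by rewrite indexg_gt1 proper_subn ?proper_CDsingleton. Qed.

Lemma center_lt_CDsingleton : #|G| * #|'Z(G)| < #|B| * #|B|.
Proof.
rewrite -mstarCD_CDsingleton ltn_neqAle [(_ * _)%N]/(mCD G G) mCD_le_mstarCD // andbT.
apply/eqP => /CDsingleton_eq eqGB.
by have := proper_CDsingleton; rewrite -(eqGB (subxx G)) (negPf (proper_irrefl _)).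
Qed.

Lemma ntriv_CDsingleton : B :!=: 1.
Proof.
apply: contraNneq nabG => B1.
have G1 : G :=: 1 by rewrite -(setIT G) -cent1T -B1 cent_CDsingleton.
by rewrite G1 abelian1.
Qed.

Lemma not_isog_Z2_CDsingleton : ~~ (B \isog [set: 'Z_2]).
Proof.
rewrite isog_Zp_setT //; apply/negP => /andP[cycB /eqP cardB].
have := index_dvd_Aut_CDsingleton; rewrite card_Aut_cyclic // cardB totient_prime //.
by move/dvdn_leq => /(_ isT); rewrite leqNgt index_gt1_CDsingleton.
Qed.

Lemma not_isog_Z4_CDsingleton : ~~ (B \isog [set: 'Z_4]).
Proof.
rewrite isog_Zp_setT //; apply/negP => /andP[cycB /eqP cardB].
have iGB : #|G : B| = 2.
  have := index_dvd_Aut_CDsingleton.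
  rewrite card_Aut_cyclic // cardB (_ : 4 = 2 ^ 2)%N // totient_pfactor //.
  move/dvdn_leq => /(_ isT) le2; apply/eqP; rewrite eqn_leq le2.
  exact: index_gt1_CDsingleton.
have cardG : #|G| = 8 by rewrite -(Lagrange sub_CDsingleton) cardB iGB.
have pG : 2.-group G by rewrite /pgroup cardG.
have := center_lt_CDsingleton; have := center_gt1_pgroup pG nabG.
rewrite cardG cardB; lia.
Qed.

Lemma not_isog_Z2Z4_CDsingleton : ~~ (B \isog [set: Z2Z4]).
Proof.
apply/negP => isoB; have [pAut fixAut] := Aut_isog_Z2Z4P isoB.
have cardB : #|B| = 8 by rewrite (card_isog isoB) cardsT card_prod !card_ord.
have sBG := sub_CDsingleton.
have p_iGB : 2.-nat #|G : B| := pnat_dvd index_dvd_Aut_CDsingleton pAut.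
have pG : 2.-group G by rewrite /pgroup -(Lagrange sBG) pnatM cardB p_iGB.
have Z_gt1 := center_gt1_pgroup pG nabG.
have ltG := center_lt_CDsingleton; rewrite -(Lagrange sBG) cardB in ltG.
have iGB : #|G : B| = 2.
  have := index_gt1_CDsingleton; have : #|G : B| < 4 by nia.
  by move: p_iGB; case: #|G : B| => [|[|[|[|]]]].
have [g Gg nBg] := subsetPn (proper_subn proper_CDsingleton).
have Na : g \in 'N(B) := subsetP norm_CDsingleton g Gg.
pose a := conj_aut B g; have Ga : a \in conj_aut B @* G := mem_morphim _ Na Gg.
have a2 : a ^+ 2 = 1 by rewrite -iGB -card_conj_aut_CDsingleton expg_cardG.
have fixE : [set x in B | a x == x] = 'C_B[g].
  apply/setP => x; rewrite in_set in_setI; case Bx: (x \in B) => //=.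
  by rewrite norm_conj_autE // conjg_fix; apply/commgP/cent1P.
have := fixAut a (subsetP (Aut_conj_aut B G) a Ga) a2; rewrite fixE => C_gt3.
have Dg : g \in G :\: B by rewrite inE Gg nBg.
have le_CZ := subset_leq_card (index2_cent1_sub_center abelian_CDsingleton sBG iGB Dg).
have Z_gt3 : 3 < #|'Z(G)| := leq_trans C_gt3 le_CZ.
by move: ltG; rewrite iGB; lia.
Qed.

End SingletonCDlattice.

(** * Holomorphs *)

Lemma fix_expg_prime (T : finType) (al : {perm T}) k x :
  prime #[al] -> al ^+ k != 1 -> (al ^+ k) x = x -> al x = x.
Proof.
move=> pr_al nt_alk fix_x.
have : generator <[al]> (al ^+ k).
  by rewrite generator_coprime prime_coprime // order_dvdn.
move/eqP => def_al; have /cycleP[m ->] : al \in <[al ^+ k]> by rewrite -def_al cycle_id.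
by rewrite permX; apply: iter_fix.
Qed.

Section Holomorph.
Variables (gT : finGroupType) (A : {group gT}).

(* Right translation by [a] on [A], extended by the identity: together with
   [Aut A] these permutations of [gT] generate a copy of the holomorph of [A]. *)
Definition transl_fun (a x : gT) := if (x \in A) && (a \in A) then x * a else x.

Lemma transl_fun_inj a : injective (transl_fun a).
Proof.
move=> x y; rewrite /transl_fun; case Aa: (a \in A); rewrite ?andbF ?andbT //.
case Ax: (x \in A); case Ay: (y \in A) => // E.
- exact: mulIg E.
- by move: Ay; rewrite -E groupM.
- by move: Ax; rewrite E groupM.
Qed.

Definition transl a : {perm gT} := perm (@transl_fun_inj a).

Lemma translE a x : transl a x = transl_fun a x.
Proof. exact: permE. Qed.

Lemma transl_morphM : {in A &, {morph transl : a b / a * b}}.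
Proof.
move=> a b Aa Ab; apply/permP => x; rewrite permM !translE /transl_fun groupM // Aa Ab.
by case Ax: (x \in A); rewrite /= ?groupM ?Ax ?mulgA.
Qed.

Canonical transl_morphism := Morphism transl_morphM.

Lemma transl1 a : a \in A -> transl a 1 = a.
Proof. by move=> Aa; rewrite translE /transl_fun group1 Aa mul1g. Qed.

Lemma injm_transl : 'injm transl_morphism.
Proof. by apply/injmP => a b Aa Ab /= E; rewrite -(transl1 Aa) -(transl1 Ab) E. Qed.

Lemma transl_conj (al : {perm gT}) a :
  al \in Aut A -> a \in A -> transl a ^ al = transl (al a).
Proof.
move=> Aal Aa; have Aal' : al^-1 \in Aut A by rewrite groupV.
have Aala : al a \in A by rewrite Aut_closed.
apply/permP => x; rewrite conjgE !permM !translE /transl_fun Aa Aala !andbT.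
case Ax: (x \in A); last by rewrite (out_Aut Aal') ?Ax // (out_Aut Aal) ?Ax.
have Aal'x : al^-1 x \in A by rewrite Aut_closed.
by rewrite Aal'x (morphicP (Aut_morphic Aal)) // -permM mulVg perm1.
Qed.

Lemma transl_cent_Aut (al : {perm gT}) a :
  al \in Aut A -> a \in A -> commute (transl a) al -> al a = a.
Proof.
move=> Aal Aa cal; apply: (injmP injm_transl); rewrite ?Aut_closed //=.
by rewrite -transl_conj // conjgE cal mulKg.
Qed.

Hypothesis abA : abelian A.

Lemma holomorph_CD (al : {perm gT}) : al \in Aut A -> prime #[al] ->
  #[al] * #|[set x in A | al x == x]| < #|A| ->
  exists G B : {group {perm gT}},
    [/\ ~~ abelian G, B \subset G, B \isog A & CDlattice G = [set gval B]].
Proof.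
move=> Aal pr_al small_fix; set B := (transl_morphism @* A)%G.
have abB : abelian B := morphim_abelian _ abA.
have cardB : #|B| = #|A| := card_injm injm_transl (subxx _).
have nBal : <[al]> \subset 'N(B).
  rewrite cycle_subG; apply/normP/eqP; rewrite eqEcard cardJg leqnn andbT.
  apply/subsetP => _ /imsetP[_ /morphimP[a _ Aa ->] ->].
  by rewrite transl_conj // mem_morphim ?Aut_closed.
have tiBal : B :&: <[al]> = 1.
  apply/trivgP/subsetP => _ /setIP[/morphimP[a _ Aa ->] /cycleP[k Ek]].
  have : transl a 1 = 1 by rewrite Ek -(autmE (groupX k Aal)) morph1.
  by rewrite transl1 // => ->; rewrite morph1 inE.
pose G := (B <*> <[al]>)%G.
have defG : B * <[al]> = G := esym (norm_joinEr nBal).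
have sBG : B \subset G := joing_subl _ _.
have iGB : #|G : B| = #[al].
  apply/eqP; rewrite -(eqn_pmul2l (cardG_gt0 B)) Lagrange // -defG.
  by rewrite -(TI_cardMg tiBal).
have ltBG : B \proper G.
  by rewrite properEcard sBG -(Lagrange sBG) iGB ltn_Pmulr ?prime_gt1 ?cardG_gt0.
have smallC : {in G :\: B, forall g, #|G : B| * #|'C_B[g]| < #|B|}.
  move=> g /setDP[]; rewrite -{1}defG => /mulsgP[y _ By /cycleP[k ->] ->] nBg.
  have nt_alk : al ^+ k != 1 by apply: contraNneq nBg => ->; rewrite mulg1.
  rewrite iGB cardB; apply: leq_ltn_trans small_fix; rewrite leq_mul2l; apply/orP; right.
  apply: leq_trans (leq_imset_card transl _); apply: subset_leq_card.
  apply/subsetP => _ /setIP[/morphimP[c _ Ac ->] /cent1P cg].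
  apply/imsetP; exists c => //; rewrite inE Ac /=; apply/eqP.
  apply: (fix_expg_prime pr_al nt_alk); apply: (transl_cent_Aut (groupX k Aal) Ac).
  have -> : al ^+ k = y^-1 * (y * al ^+ k) by rewrite mulKg.
  by apply: commuteM cg; apply/commuteV/(centsP abB); rewrite // /B mem_morphim.
exists G, B; split; last exact: CDlattice_uniqueCD smallC.
- exact: nonabelian_uniqueCD smallC.
- exact: sBG.
- by rewrite isog_sym sub_isog ?injm_transl.
Qed.

End Holomorph.

(** * Automorphisms of abelian groups with few fixed points *)

Lemma order_prime_expg (gT : finGroupType) (x : gT) p :
  prime p -> x ^+ p = 1 -> x != 1 -> #[x] = p.
Proof. by move=> pr_p xp ntx; apply/prime_nt_dvdP; rewrite ?order_eq1 ?order_dvdn ?xp. Qed.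

Section InversionAut.
Variables (gT : finGroupType) (A : {group gT}).
Hypothesis abA : abelian A.

Lemma invg_morphM : {in A &, {morph (fun x : gT => x^-1) : x y / x * y}}.
Proof. by move=> x y Ax Ay; rewrite /= invMg; apply: (centsP abA); rewrite groupV. Qed.

Canonical invg_morphism := Morphism invg_morphM.

Lemma injm_invg : 'injm invg_morphism.
Proof. by apply/injmP => x y _ _; apply: invg_inj. Qed.

Lemma im_invg : invg_morphism @* A = A.
Proof.
apply/eqP; rewrite eqEcard card_injm ?injm_invg // leqnn andbT.
by apply/subsetP => _ /morphimP[x _ Ax ->]; rewrite /= groupV.
Qed.

Definition inv_aut := aut injm_invg im_invg.

Lemma inv_aut_small_fix : 2 * #|'Ldiv_2(A)| < #|A| ->
  [/\ inv_aut \in Aut A, prime #[inv_aut]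
    & #[inv_aut] * #|[set x in A | inv_aut x == x]| < #|A|].
Proof.
move=> small_L2; have Aut_inv : inv_aut \in Aut A := Aut_aut _ _.
have fixE : [set x in A | inv_aut x == x] = 'Ldiv_2(A).
  apply/setP => x; rewrite in_set !inE; case Ax: (x \in A) => //=.
  by rewrite autE //= eq_invg_mul.
have inv2 : inv_aut ^+ 2 = 1.
  apply: (eq_Aut (groupX 2 Aut_inv) (group1 _)) => x Ax.
  by rewrite permM !autE ?groupV //= invgK perm1.
have nt_inv : inv_aut != 1.
  apply: contraTneq small_L2 => inv1; rewrite -fixE -leqNgt.
  have -> : [set x in A | inv_aut x == x] = A.
    by apply/setP => x; rewrite in_set inv1 perm1 eqxx andbT.
  by rewrite leq_pmull.
have -> : #[inv_aut] = 2 := order_prime_expg (isT : prime 2) inv2 nt_inv.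
by rewrite fixE.
Qed.

End InversionAut.

Section KleinRotation.
Variables (gT : finGroupType) (A K L : {group gT}) (a b : gT).
Hypotheses (abA : abelian A) (oa : #[a] = 2) (ob : #[b] = 2).
Hypotheses (dK : <[b]> \x L = K) (dA : <[a]> \x K = A).

Let sKA : K \subset A. Proof. by rewrite -(dprodW dA) mulG_subr. Qed.
Let sLA : L \subset A.
Proof. by apply: subset_trans sKA; rewrite -(dprodW dK) mulG_subr. Qed.
Let Aa : a \in A. Proof. by rewrite -cycle_subG -(dprodW dA) mulG_subl. Qed.
Let Kb : b \in K. Proof. by rewrite -cycle_subG -(dprodW dK) mulG_subl. Qed.
Let Ab : b \in A. Proof. exact: subsetP sKA b Kb. Qed.
Let cab : commute a b. Proof. exact: (centsP abA). Qed.
Let bb : b * b = 1. Proof. by rewrite -[b * b]/(b ^+ 2) -ob expg_order. Qed.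

Let a1 : a != 1. Proof. by rewrite -order_gt1 oa. Qed.
Let b1 : b != 1. Proof. by rewrite -order_gt1 ob. Qed.
Let ab : a != b.
Proof.
apply: contraNneq a1 => eq_ab; apply/eqP/set1gP; case/dprodP: dA => _ _ _ <-.
by rewrite inE cycle_id eq_ab Kb.
Qed.

(* [klein_rot] cycles the cosets a L -> b L -> a b L and fixes L pointwise; it is
   glued with [dprodm] from [a |-> b] on <[a]>, [b |-> a b] on <[b]> and the
   identity on L. *)
Let dvd_ba : #[b] %| #[a]. Proof. by rewrite oa ob. Qed.
Let dvd_ab_b : #[a * b] %| #[b].
Proof. by rewrite ob order_dvdn expgMn // -{1}oa -ob !expg_order mulg1. Qed.

Let a_to_b := eltm_morphism dvd_ba.
Let b_to_ab := eltm_morphism dvd_ab_b.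

Let cLb : idm_morphism L @* L \subset 'C(b_to_ab @* <[b]>).
Proof.
rewrite morphim_idm // morphim_cycle ?cycle_id //= eltm_id.
by apply: sub_abelian_cent2 abA sLA _; rewrite cycle_subG groupM.
Qed.

Let g := dprodm_morphism dK cLb.

Let cKa : g @* K \subset 'C(a_to_b @* <[a]>).
Proof.
rewrite morphim_cycle ?cycle_id //= eltm_id; apply: sub_abelian_cent2 abA _ _.
  rewrite im_dprodm morphim_idm // morphim_cycle ?cycle_id //= eltm_id.
  by rewrite mul_subG // cycle_subG groupM.
by rewrite cycle_subG.
Qed.

Let f := dprodm_morphism dA cKa.

Let fE u v l : u \in <[a]> -> v \in <[b]> -> l \in L ->
  f (u * (v * l)) = a_to_b u * (b_to_ab v * l).
Proof.
move=> au bv Ll; have Kvl : v * l \in K by rewrite -(dprodW dK) mem_mulg.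
by rewrite /f /= dprodmE //= /g dprodmE.
Qed.

Let f_l l : l \in L -> f l = l.
Proof.
by move=> Ll; have := fE (group1 _) (group1 _) Ll; rewrite !mul1g !morph1 !mul1g.
Qed.

Let f_al l : l \in L -> f (a * l) = b * l.
Proof.
by move=> Ll; have := fE (cycle_id a) (group1 _) Ll; rewrite !mul1g morph1 mul1g /= eltm_id.
Qed.

Let f_bl l : l \in L -> f (b * l) = a * b * l.
Proof.
by move=> Ll; have := fE (group1 _) (cycle_id b) Ll; rewrite !mul1g morph1 mul1g /= eltm_id.
Qed.

Let f_abl l : l \in L -> f (a * b * l) = a * l.
Proof.
move=> Ll; have := fE (cycle_id a) (cycle_id b) Ll; rewrite mulgA => -> /=.
by rewrite !eltm_id !mulgA -cab -(mulgA a b b) bb mulg1.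
Qed.

Let klein_coset x : x \in A ->
  exists2 l, l \in L & [\/ x = l, x = a * l, x = b * l | x = a * b * l].
Proof.
move=> Ax; have [u [k [au Kk -> _]]] := mem_dprod dA Ax.
have [v [l [bv Ll -> _]]] := mem_dprod dK Kk; exists l => //.
move: au bv; rewrite (cycle2g oa) (cycle2g ob) !inE.
case/orP=> /eqP-> /orP[]/eqP->; rewrite ?mul1g ?mulgA.
- by constructor 1.
- by constructor 3.
- by constructor 2.
by constructor 4.
Qed.

Let f3 x : x \in A -> f (f (f x)) = x.
Proof.
case/klein_coset=> l Ll [] ->; first by rewrite !f_l.
- by rewrite f_al // f_bl // f_abl.
- by rewrite f_bl // f_abl // f_al.
by rewrite f_abl // f_al // f_bl.
Qed.

Let fix_f x : x \in A -> f x = x -> x \in L.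
Proof.
case/klein_coset=> l Ll [] -> //.
- by rewrite f_al // => /mulIg/esym/eqP; rewrite (negPf ab).
- by rewrite f_bl // -{2}(mul1g b) => /mulIg/mulIg/eqP; rewrite (negPf a1).
by rewrite f_abl // -mulgA -{1}(mul1g l) => /mulgI/mulIg/esym/eqP; rewrite (negPf b1).
Qed.

Let sfAA : f @* A \subset A.
Proof.
rewrite im_dprodm morphim_cycle ?cycle_id //= eltm_id mul_subG ?cycle_subG //.
rewrite im_dprodm morphim_idm // morphim_cycle ?cycle_id //= eltm_id.
by rewrite mul_subG ?cycle_subG ?groupM.
Qed.

Let fA y : y \in A -> f y \in A.
Proof. by move=> Ay; rewrite (subsetP sfAA) ?mem_morphim. Qed.

Let imfA : f @* A = A.
Proof.
apply/eqP; rewrite eqEsubset sfAA; apply/subsetP => x Ax; rewrite -(f3 Ax).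
by rewrite !mem_morphim ?fA.
Qed.

Let injf : 'injm f. Proof. by rewrite -card_im_injm imfA. Qed.

Definition klein_rot := aut injf imfA.

Lemma klein_rot_small_fix :
  [/\ klein_rot \in Aut A, prime #[klein_rot]
    & #[klein_rot] * #|[set x in A | klein_rot x == x]| < #|A|].
Proof.
have Aut_rot : klein_rot \in Aut A := Aut_aut _ _.
have cardA : #|A| = (4 * #|L|)%N.
  by rewrite -(dprod_card dA) -(dprod_card dK) -!orderE oa ob mulnA.
have fixL : [set x in A | klein_rot x == x] \subset L.
  by apply/subsetP => x; rewrite inE => /andP[Ax /eqP]; rewrite autE //; apply: fix_f.
have rot3 : klein_rot ^+ 3 = 1.
  apply: (eq_Aut (groupX 3 Aut_rot) (group1 _)) => x Ax.
  by rewrite permX /= autE // autE ?fA // autE ?fA // f3 // perm1.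
have nt_rot : klein_rot != 1.
  apply/eqP => rot1; have := subset_leq_card fixL.
  have -> : [set x in A | klein_rot x == x] = A.
    by apply/setP => x; rewrite in_set rot1 perm1 eqxx andbT.
  by rewrite cardA; have := cardG_gt0 L; lia.
have -> : #[klein_rot] = 3 := order_prime_expg (isT : prime 3) rot3 nt_rot.
split=> //; rewrite cardA; have := subset_leq_card fixL; have := cardG_gt0 L; lia.
Qed.
End KleinRotation.

Lemma isog_Z2Z4_dprod (gT : finGroupType) (A : {group gT}) (x k : gT) :
  #[x] = 4 -> #[k] = 2 -> <[x]> \x <[k]> = A -> A \isog [set: Z2Z4].
Proof.
move=> ox ok; rewrite dprodC => dA.
have -> : [set: Z2Z4] = setX [set: 'Z_2] [set: 'Z_4] by apply/setP => -[u v]; rewrite !inE.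
apply: (isog_dprod dA (setX_dprod [set: 'Z_2]%G [set: 'Z_4]%G)).
  have iZ2 : <[k]> \isog [set: 'Z_2] by rewrite isog_Zp_setT // cycle_cyclic -orderE ok.
  exact: isog_trans iZ2 (isog_setX1 _ _).
have iZ4 : <[x]> \isog [set: 'Z_4] by rewrite isog_Zp_setT // cycle_cyclic -orderE ox.
exact: isog_trans iZ4 (isog_set1X _ _).
Qed.

Lemma abelem2_split_involution (gT : finGroupType) (E : {group gT}) :
  2.-abelem E -> E :!=: 1 -> exists b (E1 : {group gT}), #[b] = 2 /\ <[b]> \x E1 = E.
Proof.
move=> abelE /trivgPn[b Eb ntb]; exists b.
have sbE : <[b]> \subset E by rewrite cycle_subG.
have [E1 /complP[tiE1 defE]] := splitsP (abelem_splits abelE sbE).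
exists E1; split; first exact: abelem_order_p abelE Eb ntb.
by rewrite dprodE // (sub_abelian_cent2 (abelem_abelian abelE)) // -defE mulG_subr.
Qed.

Lemma abelem2_klein_dprod (gT : finGroupType) (A E M : {group gT}) :
  2.-abelem E -> 2 < #|E| -> E \x M = A ->
  exists a b (K L : {group gT}), [/\ #[a] = 2, #[b] = 2, <[b]> \x L = K & <[a]> \x K = A].
Proof.
move=> abelE E_gt2 dA; have ntE : E :!=: 1 by rewrite -cardG_gt1 ltnW.
have [a [E1 [oa dE]]] := abelem2_split_involution abelE ntE.
have ntE1 : E1 :!=: 1.
  by apply: contraTneq E_gt2 => E1_1; rewrite -(dprod_card dE) E1_1 cards1 -orderE oa.
have abelE1 : 2.-abelem E1 by apply: abelemS abelE; rewrite -(dprodW dE) mulG_subr.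
have [b [E2 [ob dE1]]] := abelem2_split_involution abelE1 ntE1.
rewrite -dE -dprodA in dA; have [[_ K _ defK] _ _ _] := dprodP dA.
rewrite defK in dA; rewrite -dE1 -dprodA in defK; have [[_ L _ defL] _ _ _] := dprodP defK.
by exists a, b, K, L; rewrite -defL.
Qed.

Lemma Ldiv2_index2_dprod (gT : finGroupType) (A : {group gT}) :
  abelian A -> #|A| <= 2 * #|'Ldiv_2(A)| -> ~~ (A \subset 'Ldiv_2(A)) ->
  exists x (K : {group gT}), [/\ #[x] = 4, 2.-abelem K & <[x]> \x K = A].
Proof.
move=> abA A_le nsAL; pose L2 := Group (group_Ldiv 2 abA).
have sLA : L2 \subset A := subsetIl _ _.
have iAL : #|A : L2| = 2.
  apply/eqP; rewrite eqn_leq indexg_gt1 nsAL andbT -(leq_pmul2l (cardG_gt0 L2)).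
  by rewrite Lagrange // mulnC.
have [x Ax nLx] := subsetPn nsAL.
have DLx : x \in A :\: L2 by rewrite inE nLx Ax.
have sqA y : y \in A -> y ^+ 2 = 1 \/ y ^+ 2 = x ^+ 2.
  move=> Ay; have [Ly | nLy] := boolP (y \in L2); first by left; case/LdivP: Ly.
  have : y \in L2 :* x by rewrite (rcoset_index2 sLA iAL DLx) inE nLy Ay.
  case/rcosetP => w /LdivP[Aw w2] ->; right.
  by rewrite expgMn ?w2 ?mul1g //; apply: (centsP abA).
have x2 : x ^+ 2 != 1 by apply: contra nLx => /eqP x2; apply/LdivP.
have x4 : x ^+ 4 = 1.
  rewrite (expgM x 2 2); case: (sqA _ (groupX 2 Ax)) => // x4_2.
  by case/eqP: x2; apply: (mulgI (x ^+ 2)); rewrite mulg1; apply: x4_2.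
have ox : #[x] = 4.
  have : ~~ (#[x] %| 2) by rewrite order_dvdn.
  have : #[x] %| 4 by rewrite order_dvdn x4.
  by case: #[x] => [|[|[|[|[|n]]]]].
have expA : #[x] = exponent A.
  apply/eqP; rewrite eqn_dvd dvdn_exponent //= ox; apply/exponentP => y Ay.
  by rewrite (expgM y 2 2); case: (sqA y Ay) => ->; rewrite ?expg1n // -expgM.
have [K /complP[tiK defA]] := splitsP (abelian_splits Ax expA abA).
have sKA : K \subset A by rewrite -defA mulG_subr.
exists x, K; split=> //; last by rewrite dprodE // (sub_abelian_cent2 abA) ?cycle_subG.
apply: exponent2_abelem; apply/exponentP => k Kk.
have [//| k2] := sqA k (subsetP sKA k Kk); case/eqP: x2; apply/set1gP.
by rewrite -tiK inE mem_cycle -k2 groupX.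
Qed.

Lemma two_lt_card (gT : finGroupType) (A : {group gT}) :
  A :!=: 1 -> ~~ (A \isog [set: 'Z_2]) -> 2 < #|A|.
Proof.
move=> ntA nZ2; rewrite ltn_neqAle cardG_gt1 ntA andbT.
by apply: contra nZ2 => /eqP A2; rewrite isog_Zp_setT // prime_cyclic -A2 ?eqxx.
Qed.

Lemma exists_prime_aut_small_fix (gT : finGroupType) (A : {group gT}) :
  abelian A -> A :!=: 1 -> ~~ (A \isog [set: 'Z_2]) -> ~~ (A \isog [set: 'Z_4]) ->
  ~~ (A \isog [set: Z2Z4]) ->
  exists al, [/\ al \in Aut A, prime #[al] & #[al] * #|[set x in A | al x == x]| < #|A|].
Proof.
move=> abA ntA nZ2 nZ4 nZ2Z4.
have [small_L2 | big_L2] := ltnP (2 * #|'Ldiv_2(A)|) #|A|.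
  by exists (inv_aut abA); apply: inv_aut_small_fix.
suff [a [b [K [L [oa ob dK dA]]]]] : exists a b (K L : {group gT}),
    [/\ #[a] = 2, #[b] = 2, <[b]> \x L = K & <[a]> \x K = A].
  by exists (klein_rot abA oa ob dK dA); apply: klein_rot_small_fix.
have [sAL | nsAL] := boolP (A \subset 'Ldiv_2(A)).
  apply: abelem2_klein_dprod (dprodg1 A); last exact: two_lt_card.
  by apply: exponent2_abelem; rewrite -sub_Ldiv.
have [x [K [ox abelK dA]]] := Ldiv2_index2_dprod abA big_L2 nsAL.
apply: abelem2_klein_dprod abelK _ (_ : K \x <[x]> = A); last by rewrite dprodC.
apply: two_lt_card.
  apply: contra nZ4 => /eqP K1.
  by rewrite -dA K1 dprodg1 isog_Zp_setT // cycle_cyclic -orderE ox.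
apply: contra nZ2Z4; rewrite isog_Zp_setT // => /andP[/cyclicP[k defK] /eqP K2].
by apply: (isog_Z2Z4_dprod ox (k := k)); rewrite ?orderE -defK.
Qed.

Theorem corollary3p4 (gT : finGroupType) (A : {group gT}) (abA : abelian A) :
  (exists (hT : finGroupType) (G B : {group hT}),
      ~~ abelian G /\ B \subset G /\ B \isog A /\ CDlattice G = [set (B : {set hT})])
  <->
  [/\ A :!=: 1,
      ~~ (A \isog [set: 'Z_2]),
      ~~ (A \isog [set: 'Z_4]) &
      ~~ (A \isog [set: ('Z_2 * 'Z_4)%type])].
Proof.
split=> [[hT [G [B [nabG [_ [isoBA CDG]]]]]] | [ntA nZ2 nZ4 nZ2Z4]].
  split; first by rewrite -(isog_eq1 isoBA) (ntriv_CDsingleton CDG nabG).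
  - by apply: contra (not_isog_Z2_CDsingleton CDG nabG); apply: isog_trans isoBA.
  - by apply: contra (not_isog_Z4_CDsingleton CDG nabG); apply: isog_trans isoBA.
  by apply: contra (not_isog_Z2Z4_CDsingleton CDG nabG); apply: isog_trans isoBA.
have [al [Aal pr_al small_fix]] := exists_prime_aut_small_fix abA ntA nZ2 nZ4 nZ2Z4.
have [G [B [nabG sBG isoBA CDG]]] := holomorph_CD abA Aal pr_al small_fix.
by exists _, G, B.
Qed.
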